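(* If $H$ is a finite simple connected graph of order at least $4$, then the Cartesian product $K_3 \,\square\, H$ is not well-dominated.
   Context: A graph is well-dominated if every minimal (with respect to inclusion) dominating set is a minimum dominating set. The Cartesian product $G\,\square\, H$ has vertex set $V(G)\times V(H)$, with $(g_1,h_1)$ adjacent to $(g_2,h_2)$ iff either ($g_1=g_2$ and $h_1h_2\in E(H)$) or ($h_1=h_2$ and $g_1g_2\in E(G)$). *)

From mathcomp Require Import all_boot.
Set Implicit Arguments. Unset Strict Implicit. Unset Printing Implicit Defensive.

Definition simple_graph (T : finType) (e : rel T) : Prop :=
  symmetric e /\ irreflexive e.

Definition connected_graph (T : finType) (e : rel T) : Prop :=
  forall x y : T, connect e x y.

Definition dominating (T : finType) (e : rel T) (D : {set T}) : bool :=
  [forall v, (v \in D) || [exists u in D, e u v]].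

Definition minimal_dominating (T : finType) (e : rel T) (D : {set T}) : Prop :=
  dominating e D /\ forall D' : {set T}, D' \proper D -> ~~ dominating e D'.

Definition minimum_dominating (T : finType) (e : rel T) (D : {set T}) : Prop :=
  dominating e D /\ forall D' : {set T}, dominating e D' -> #|D| <= #|D'|.

Definition well_dominated (T : finType) (e : rel T) : Prop :=
  forall D : {set T}, minimal_dominating e D -> minimum_dominating e D.

Definition complete_rel (n : nat) : rel 'I_n := fun i j => i != j.
Arguments complete_rel n : clear implicits.

Definition cartesian_rel (T1 T2 : finType) (e1 : rel T1) (e2 : rel T2)
  : rel (T1 * T2) :=
  fun x y => ((x.1 == y.1) && e2 x.2 y.2) || ((x.2 == y.2) && e1 x.1 y.1).

From mathcomp Require Import all_boot.

(* The layer {0} x V(H) is a minimal dominating set of K3 □ H with n = |V(H)|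
   vertices, so if the product is well-dominated, every dominating set has at
   least n vertices and every minimal dominating set at most n.  If every vertex
   of A other than c is adjacent to c and has a neighbour outside A, then
   {1, 2} x {c} together with {0} x (V(H) \ A) dominates, hence |A| <= 2.  With
   A = N(c) this bounds all degrees by 2; with A = N[c] it shows that a vertex c
   of degree 2 has a neighbour w with N(w) included in N[c].  In a connected
   graph on at least four vertices these two local conditions force H to be a
   path b c d f, and then K3 x {b, f} is a minimal dominating set with 6 > 4
   vertices. *)

Set Implicit Arguments.
Unset Strict Implicit.
Unset Printing Implicit Defensive.

Lemma edge_neq (T : eqType) (e : rel T) : irreflexive e -> forall x y, e x y -> x != y.
Proof. by move=> e_irr x y; apply: contraTneq => ->; rewrite e_irr. Qed.

Definition spanning_path4 (T : eqType) (e : rel T) (b c d f : T) : Prop :=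
  [/\ forall y, y \in [:: b; c; d; f], e b c, e f d,
      forall z, e b z -> z = c & forall z, e f z -> z = d].

Section Domination.
Variables (T : finType) (e : rel T).

Lemma private_neighbour_not_dominating (D D' : {set T}) x v :
  D' \subset D -> x \notin D' -> v \notin D ->
  (forall u, u \in D -> e u v -> u = x) -> ~~ dominating e D'.
Proof.
move=> sD'D xD' vD privx; apply/negP=> /forallP/(_ v)/orP[vD' | /existsP[u /andP[uD' euv]]].
  by rewrite (subsetP sD'D v vD') in vD.
by move: (uD'); rewrite (privx u (subsetP sD'D u uD') euv) (negbTE xD').
Qed.

Lemma minimal_dominating_private (D : {set T}) :
  dominating e D ->
  (forall x, x \in D -> exists2 v, v \notin D & forall u, u \in D -> e u v -> u = x) ->
  minimal_dominating e D.
Proof.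
move=> domD priv; split=> // D' /properP[sD'D [x xD xD']].
have [v vD privx] := priv x xD.
exact: private_neighbour_not_dominating sD'D xD' vD privx.
Qed.

Lemma well_dominated_card_le (D D' : {set T}) :
  well_dominated e -> minimal_dominating e D -> dominating e D' -> #|D| <= #|D'|.
Proof. by move=> wd /wd[_ minD] /minD. Qed.

End Domination.

Section K3Product.
Variables (T : finType) (e : rel T).
Local Notation K3H := (cartesian_rel (complete_rel 3) e).

Definition layer0 : {set 'I_3 * T} := setX [set ord0] setT.

Lemma card_layer0 : #|layer0| = #|T|.
Proof. by rewrite cardsX cards1 cardsT mul1n. Qed.

Lemma layer0_minimal_dominating : minimal_dominating K3H layer0.
Proof.
apply: minimal_dominating_private.
  apply/forallP=> -[i h]; rewrite !inE /=; have [//|i0] := eqVneq i ord0.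
  apply/existsP; exists (ord0, h).
  by rewrite !inE /cartesian_rel /complete_rel /= eqxx eq_sym i0 orbT.
move=> [i h]; rewrite !inE /= andbT => /eqP->; exists (inord 1, h).
  by rewrite !inE -val_eqE /= inordK.
move=> [j g]; rewrite !inE /= andbT => /eqP->.
by rewrite /cartesian_rel /complete_rel /= -val_eqE /= inordK //= andbT => /eqP->.
Qed.

Definition hub_set (c : T) (A : {set T}) : {set 'I_3 * T} :=
  setX [set~ ord0] [set c] :|: setX [set ord0] (~: A).

Lemma card_hub_set c A : #|hub_set c A| <= 2 + #|~: A|.
Proof.
apply: leq_trans (leq_card_setU _ _) _.
by rewrite !cardsX cardsC1 card_ord !cards1 mul1n.
Qed.

Lemma hub_set_dominating c (A : {set T}) :
  (forall h, h \in A -> h != c -> e c h /\ exists2 z, z \notin A & e z h) ->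
  dominating K3H (hub_set c A).
Proof.
move=> hubA; apply/forallP=> -[i h]; rewrite !inE /=.
have hubE (j : 'I_3) g :
    (j, g) \in hub_set c A = ((j != ord0) && (g == c)) || ((j == ord0) && (g \notin A)).
  by rewrite !inE.
have [hA|hA] := boolP (h \in A); last first.
  have [->|i0] := eqVneq i ord0 => //=; apply/orP; right; apply/existsP; exists (ord0, h).
  by rewrite hubE eqxx hA /cartesian_rel /complete_rel /= eqxx eq_sym i0 orbT.
have [->|hc] := eqVneq h c.
  have [->|i0] := eqVneq i ord0; rewrite ?andbT //=; apply/existsP; exists (inord 1, c).
  by rewrite hubE /cartesian_rel /complete_rel /= !eqxx -val_eqE /= inordK.
have [ech [z zA ezh]] := hubA h hA hc; rewrite !andbF /=; apply/existsP.
have [->|i0] := eqVneq i ord0.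
  by exists (ord0, z); rewrite hubE zA /cartesian_rel /= ?eqxx ezh.
by exists (i, c); rewrite hubE i0 /cartesian_rel /= ?eqxx ech.
Qed.

Lemma path4_ends_minimal_dominating b c d f :
  uniq [:: b; c; d; f] -> spanning_path4 e b c d f ->
  minimal_dominating K3H (setX setT [set b; f]).
Proof.
move=> /= + [cover ebc efd leaf_b leaf_f].
rewrite !inE !negb_or => /and4P[/and3P[bc bd _] /andP[cd cf] df _].
apply: minimal_dominating_private.
  apply/forallP=> -[i h]; rewrite !inE /=.
  move: (cover h); rewrite !inE => /or4P[]/eqP->; rewrite ?eqxx ?orbT //=;
    apply/orP; right; apply/existsP.
  - by exists (i, b); rewrite !inE /cartesian_rel /= ?eqxx ebc.
  - by exists (i, f); rewrite !inE /cartesian_rel /= ?eqxx ?orbT efd.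
move=> [i h]; rewrite !inE /= => /orP[]/eqP->.
- exists (i, c); first by rewrite !inE /= negb_or eq_sym bc cf.
  move=> [j g]; rewrite !inE /= /cartesian_rel /= => /orP[]/eqP->.
  + by rewrite (negbTE bc) /= orbF => /andP[/eqP->].
  + rewrite [f == c]eq_sym (negbTE cf) /= orbF => /andP[_ /leaf_f dc].
    by rewrite dc eqxx in cd.
- exists (i, d); first by rewrite !inE /= negb_or eq_sym bd df.
  move=> [j g]; rewrite !inE /= /cartesian_rel /= => /orP[]/eqP->.
  + rewrite (negbTE bd) /= orbF => /andP[_ /leaf_b db].
    by rewrite db eqxx in cd.
  + by rewrite [f == d]eq_sym (negbTE df) /= orbF => /andP[/eqP->].
Qed.

End K3Product.

Section WellDominatedK3Product.
Variables (T : finType) (e : rel T).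
Hypotheses (e_sym : symmetric e) (e_irr : irreflexive e).
Hypothesis wd : well_dominated (cartesian_rel (complete_rel 3) e).

Lemma hub_card_le2 c (A : {set T}) :
  (forall h, h \in A -> h != c -> e c h /\ exists2 z, z \notin A & e z h) -> #|A| <= 2.
Proof.
move=> /hub_set_dominating/(well_dominated_card_le wd (layer0_minimal_dominating e)).
rewrite card_layer0 -(cardsC A) => /leq_trans/(_ (card_hub_set c A)).
by rewrite leq_add2r.
Qed.

Lemma well_dominated_degree_le2 c b d z : e c b -> e c d -> b != d -> e c z -> z \in [:: b; d].
Proof.
move=> ecb ecd bd ecz; apply: contraT; rewrite !inE negb_or => /andP[zb zd].
have: 2 < #|[set y | e c y]|.
  by apply/card_gt2P; exists b, d, z; rewrite !inE ecb ecd ecz bd eq_sym zb zd.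
rewrite ltnNge (@hub_card_le2 c) // => h; rewrite inE => ech _.
by split=> //; exists c; rewrite ?inE ?e_irr.
Qed.

Lemma well_dominated_dominated_neighbour c b d : e c b -> e c d -> b != d ->
  exists2 w, e c w & forall z, e w z -> (z == c) || e c z.
Proof.
move=> ecb ecd bd.
have [/existsP[w /andP[ecw /forallP Nw]] | none] :=
  boolP [exists w, e c w && [forall z, e w z ==> (z == c) || e c z]].
  by exists w => // z /(implyP (Nw z)).
have: 2 < #|c |: [set y | e c y]|.
  apply/card_gt2P; exists c, b, d; rewrite !inE !eqxx ecb ecd !orbT bd.
  by rewrite (edge_neq e_irr ecb) eq_sym (edge_neq e_irr ecd).
rewrite ltnNge (@hub_card_le2 c) // => h; rewrite !inE => /predU1P[-> /eqP //| ech _].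
split=> //; move: none; rewrite negb_exists => /forallP/(_ h); rewrite ech negb_forall.
case/existsP=> z; rewrite negb_imply => /andP[ehz zN].
by exists z; rewrite 1?e_sym // !inE.
Qed.

End WellDominatedK3Product.

Section MaxDegreeTwoGraph.
Variables (T : finType) (e : rel T).
Hypotheses (e_sym : symmetric e) (e_irr : irreflexive e) (e_conn : connected_graph e).

Lemma closed_seq_covers (s : seq T) x :
  x \in s -> (forall u v, u \in s -> e u v -> v \in s) -> forall y, y \in s.
Proof.
move=> xs s_closed y; have /connectP[p] := e_conn x y.
elim: p x xs => [|z p IHp] x xs /=; first by move=> _ ->.
by case/andP=> exz ezp; apply: IHp ezp; exact: s_closed xs exz.
Qed.

Lemma card_le_covering_seq (s : seq T) : (forall y, y \in s) -> #|T| <= size s.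
Proof. by move=> s_covers; rewrite cardE uniq_leq_size ?enum_uniq. Qed.

Hypothesis card_gt3 : 3 < #|T|.

Lemma closed_seq_size_gt3 (s : seq T) x :
  x \in s -> (forall u v, u \in s -> e u v -> v \in s) -> 3 < size s.
Proof.
by move=> xs /(closed_seq_covers xs)/card_le_covering_seq; apply: leq_trans.
Qed.

Lemma exists_path3 : exists c b d, [/\ e c b, e c d & b != d].
Proof.
have [/existsP[c /existsP[b /existsP[d /and3P[]]]] | none] :=
  boolP [exists c, exists b, exists d, [&& e c b, e c d & b != d]].
  by exists c, b, d.
have nb_unique c b d : e c b -> e c d -> b = d.
  move=> ecb ecd; apply/eqP; apply: contraNT none => bd.
  apply/existsP; exists c; apply/existsP; exists b; apply/existsP; exists d.
  by rewrite ecb ecd.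
have /card_gt0P[x _] : 0 < #|T| by apply: leq_trans card_gt3.
have [/existsP[w exw] | isolated] := boolP [exists w, e x w].
  have ewx : e w x by rewrite e_sym.
  suff: 3 < size [:: x; w] by [].
  apply: (closed_seq_size_gt3 (mem_head x _)) => u v; rewrite !inE.
  case/orP=> /eqP-> euv.
    by rewrite (nb_unique _ _ _ exw euv) eqxx orbT.
  by rewrite (nb_unique _ _ _ ewx euv) eqxx.
suff: 3 < size [:: x] by [].
apply: (closed_seq_size_gt3 (mem_head x _)) => u v; rewrite mem_seq1 => /eqP-> exv.
by case/existsP: isolated; exists v.
Qed.

Hypothesis degree_le2 :
  forall c b d z, e c b -> e c d -> b != d -> e c z -> z \in [:: b; d].
Hypothesis dominated_neighbour : forall c b d, e c b -> e c d -> b != d ->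
  exists2 w, e c w & forall z, e w z -> (z == c) || e c z.

Lemma dominated_neighbour_leaf c b d : e c b -> e c d -> b != d ->
  (forall z, e b z -> (z == c) || e c z) -> forall z, e b z -> z = c.
Proof.
move=> ecb ecd bd Nb z ebz; apply/eqP; move: (Nb z ebz); case: (z =P c) => //= _ ecz.
have sub_bd v : v \in [:: b; d] -> [|| v == b, v == c | v == d].
  by rewrite !inE => /orP[]->; rewrite ?orbT.
have ebd : e b d.
  move: (degree_le2 ecb ecd bd ecz); rewrite !inE => /orP[]/eqP zbd; move: ebz.
    by rewrite zbd e_irr.
  by rewrite zbd.
have [edb edc] : e d b /\ e d c by rewrite !(e_sym d).
have cb : c != b := edge_neq e_irr ecb.
suff: 3 < size [:: b; c; d] by [].
apply: (closed_seq_size_gt3 (mem_head b _)) => u v /[!inE] /or3P[]/eqP-> euv.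
- by case/orP: (Nb v euv) => [->|/(degree_le2 ecb ecd bd)/sub_bd]; rewrite ?orbT.
- exact/sub_bd/(degree_le2 ecb ecd bd).
- by move: (degree_le2 edc edb cb euv); rewrite !inE => /orP[]->; rewrite ?orbT.
Qed.

Lemma path4_of_dominated_neighbour c b d : e c b -> e c d -> b != d ->
  (forall z, e b z -> (z == c) || e c z) -> exists f, spanning_path4 e b c d f.
Proof.
move=> ecb ecd bd /(dominated_neighbour_leaf ecb ecd bd) leaf_b.
have [edc cd] : e d c /\ c != d by rewrite e_sym (edge_neq e_irr ecd).
have [/existsP[f /andP[edf fc]] | no_f] := boolP [exists f, e d f && (f != c)]; last first.
  suff: 3 < size [:: b; c; d] by [].
  apply: (closed_seq_size_gt3 (mem_head b _)) => u v /[!inE] /or3P[]/eqP-> euv.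
  - by rewrite (leaf_b v euv) eqxx orbT.
  - by move: (degree_le2 ecb ecd bd euv); rewrite !inE => /orP[]->; rewrite ?orbT.
  - by move: no_f; rewrite negb_exists => /forallP/(_ v); rewrite euv negbK => ->; rewrite orbT.
have cf : c != f by rewrite eq_sym.
have [w edw Nw] := dominated_neighbour edc edf cf.
have wf : w = f.
  move: (degree_le2 edc edf cf edw); rewrite !inE => /orP[]/eqP // wc.
  move: (Nw b); rewrite wc ecb => /(_ isT)/orP[/eqP bd' | edb]; first by rewrite bd' eqxx in bd.
  by move: cd; rewrite (leaf_b d) ?eqxx // e_sym.
have leaf_f : forall z, e f z -> z = d by apply: dominated_neighbour_leaf edf edc fc _; rewrite -wf.
exists f; split; rewrite ?(e_sym b) ?(e_sym f) //.
apply: (closed_seq_covers (mem_head b _)) => u v /[!inE] /or4P[]/eqP-> euv.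
- by rewrite (leaf_b v euv) eqxx orbT.
- by move: (degree_le2 ecb ecd bd euv); rewrite !inE => /orP[]->; rewrite ?orbT.
- by move: (degree_le2 edc edf cf euv); rewrite !inE => /orP[]->; rewrite ?orbT.
- by rewrite (leaf_f v euv) eqxx !orbT.
Qed.

Lemma exists_spanning_path4 : exists b c d f, spanning_path4 e b c d f.
Proof.
have [c [b [d [ecb ecd bd]]]] := exists_path3.
have [w ecw Nw] := dominated_neighbour ecb ecd bd.
move: (degree_le2 ecb ecd bd ecw); rewrite !inE => /orP[]/eqP wE; move: Nw; rewrite wE.
  by case/(path4_of_dominated_neighbour ecb ecd bd)=> f P4; exists b, c, d, f.
rewrite eq_sym in bd.
by case/(path4_of_dominated_neighbour ecd ecb bd)=> f P4; exists d, c, b, f.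
Qed.

End MaxDegreeTwoGraph.

Theorem proposition23 (T : finType) (e : rel T) :
  simple_graph e -> connected_graph e -> 3 < #|T| ->
  ~ well_dominated (cartesian_rel (complete_rel 3) e).
Proof.
move=> [e_sym e_irr] e_conn card_gt3 wd.
have [b [c [d [f P4]]]] := exists_spanning_path4 e_sym e_irr e_conn card_gt3
  (well_dominated_degree_le2 e_irr wd) (well_dominated_dominated_neighbour e_sym e_irr wd).
have [cover _ _ _ _] := P4.
have uniq_bcdf : uniq [:: b; c; d; f].
  by apply: leq_size_uniq (enum_uniq T) (fun y _ => cover y) _; rewrite -cardE.
have bf : b != f.
  by move: uniq_bcdf; rewrite /= !inE !negb_or => /and4P[/and3P[_ _ ->]].
have := well_dominated_card_le wd (path4_ends_minimal_dominating uniq_bcdf P4)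
  (layer0_minimal_dominating e).1.
rewrite card_layer0 cardsX cardsT card_ord cards2 bf.
by move=> /leq_trans/(_ (card_le_covering_seq cover)).
Qed.
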